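(* Let $\Sigma=(X,\mathcal D,\phi)$ be an RFC system. If there is a bounded set $\mathcal A\subset X$ such that $\Sigma$ possesses a non-coercive Lyapunov function with respect to $\mathcal A$, then $\Sigma$ is practically UGAS, i.e. there exist $\beta\in\mathcal{KL}$ and $c>0$ such that $\|\phi(t,x,d)\|\le\beta(\|x\|,t)+c$ for all $x\in X$, $d\in\mathcal D$, $t\ge0$.
   Context: $\mathbb R_+=[0,\infty)$. A system is a triple $\Sigma=(X,\mathcal D,\phi)$ where $(X,\|\cdot\|)$ is a normed linear space; $D$ is a nonempty subset of some normed linear space; $\mathcal D$ is a set of functions $d:\mathbb R_+\to D$ closed under time shifts $d\mapsto d(\cdot+\tau)$, $\tau\ge0$, and under concatenation ($d(s)=d_1(s)$ for $s\in[0,t]$, $d(s)=d_2(s-t)$ for $s>t$, any $d_1,d_2\in\mathcal D$, $t>0$); and $\phi:\mathbb R_+\times X\times\mathcal D\to X$ is an everywhere defined map with $\phi(0,x,d)=x$; $\phi(t,x,d)=\phi(t,x,\tilde d)$ whenever $d=\tilde d$ on $[0,t]$; $t\mapsto\phi(t,x,d)$ continuous; and $\phi(h,\phi(t,x,d),d(t+\cdot))=\phi(t+h,x,d)$ for all $t,h\ge0$. $\Sigma$ is RFC if for all $C,\tau>0$: $\sup\{\|\phi(t,x,d)\|:\|x\|\le C,d\in\mathcal D,t\in[0,\tau]\}<\infty$. $\|x\|_{\mathcal A}=\inf_{y\in\mathcal A}\|x-y\|$. $\mathcal K$: continuous strictly increasing $\gamma:\mathbb R_+\to\mathbb R_+$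 with $\gamma(0)=0$; $\mathcal K_\infty$: unbounded elements of $\mathcal K$; $\mathcal{KL}$: continuous $\beta:\mathbb R_+^2\to\mathbb R_+$ with $\beta(\cdot,t)\in\mathcal K$ for all $t$ and $\beta(r,\cdot)$ strictly decreasing to $0$ for all $r>0$. For continuous $V:X\to\mathbb R$, $x\in X$, $d\in\mathcal D$, define the Dini derivative $\dot V_d(x)=\liminf_{t\to0^+}\frac1t\big(V(\phi(t,x,d))-V(x)\big)$. A continuous $V:X\to\mathbb R_+$ is a non-coercive Lyapunov function for $\Sigma$ w.r.t. a bounded set $\mathcal A$ if $V(x)=0$ for $x\in\mathcal A$ and there are $\psi_2\in\mathcal K_\infty$, $\alpha\in\mathcal K$ with $0<V(x)\le\psi_2(\|x\|_{\mathcal A})$ for all $x\in X\setminus\mathcal A$ and $\dot V_d(x)\le-\alpha(\|x\|_{\mathcal A})$ for all $x\in X\setminus\mathcal A$, $d\in\mathcal D$. *)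

From HB Require Import structures.
From mathcomp Require Import all_boot all_order all_algebra.
From mathcomp Require Import all_classical all_reals all_analysis.
Set Implicit Arguments. Unset Strict Implicit. Unset Printing Implicit Defensive.
Import Order.TTheory GRing.Theory Num.Theory.
Import numFieldNormedType.Exports.
Local Open Scope classical_set_scope.
Local Open Scope ring_scope.

(* Functions on R_+ are represented as functions on R; only their values on
   [0, +oo) matter. *)

Definition classK {R : realType} (g : R -> R) : Prop :=
  {within [set t : R | 0 <= t], continuous g} /\
  (forall a b : R, 0 <= a -> a < b -> g a < g b) /\
  g 0 = 0.

Definition classKinf {R : realType} (g : R -> R) : Prop :=
  classK g /\ (forall M : R, exists r : R, 0 <= r /\ M < g r).

Definition classKL {R : realType} (beta : R -> R -> R) : Prop :=
  {within [set p : R * R | 0 <= p.1 /\ 0 <= p.2],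
     continuous (fun p : R * R => beta p.1 p.2)} /\
  (forall t : R, 0 <= t -> classK (fun r => beta r t)) /\
  (forall r : R, 0 < r ->
     (forall s t : R, 0 <= s -> s < t -> beta r t < beta r s) /\
     (beta r t @[t --> +oo] --> 0)).

(* A system Sigma = (X, Dc, phi), inputs d : R_+ -> D with D a subset of the
   normed space E. *)
Definition is_system {R : realType} (X E : normedModType R) (D : set E)
  (Dc : set (R -> E)) (phi : R -> X -> (R -> E) -> X) : Prop :=
  D !=set0 /\
  (forall d, Dc d -> forall s : R, 0 <= s -> D (d s)) /\
  (forall d, Dc d -> forall tau : R, 0 <= tau -> Dc (fun s => d (s + tau))) /\
  (forall d1 d2, Dc d1 -> Dc d2 -> forall t : R, 0 < t ->
     Dc (fun s => if s <= t then d1 s else d2 (s - t))) /\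
  (forall x d, Dc d -> phi 0 x d = x) /\
  (forall t x d d', Dc d -> Dc d' -> 0 <= t ->
     (forall s, 0 <= s <= t -> d s = d' s) -> phi t x d = phi t x d') /\
  (forall x d, Dc d -> {within [set t : R | 0 <= t], continuous (fun t => phi t x d)}) /\
  (forall x d t h, Dc d -> 0 <= t -> 0 <= h ->
     phi h (phi t x d) (fun s => d (t + s)) = phi (t + h) x d).

Definition RFC {R : realType} (X E : normedModType R)
  (Dc : set (R -> E)) (phi : R -> X -> (R -> E) -> X) : Prop :=
  forall C tau : R, 0 < C -> 0 < tau ->
    exists M : R, forall x d t, `|x| <= C -> Dc d -> 0 <= t <= tau ->
      `|phi t x d| <= M.

Definition dist_set {R : realType} (X : normedModType R) (A : set X) (x : X) : R :=
  inf [set `|x - y| | y in A].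

(* lower right Dini derivative, as an extended real:
   liminf_{t -> 0+} (V(phi t x d) - V x) / t
   = sup_{e > 0} inf_{0 < t < e} (V(phi t x d) - V x) / t *)
Definition dini {R : realType} (X E : normedModType R)
  (phi : R -> X -> (R -> E) -> X) (V : X -> R) (x : X) (d : R -> E) : \bar R :=
  ereal_sup [set ereal_inf [set ((V (phi t x d) - V x) / t)%:E
                             | t in [set t : R | 0 < t < e]]
            | e in [set e : R | 0 < e]].

Definition noncoercive_LF {R : realType} (X E : normedModType R)
  (Dc : set (R -> E)) (phi : R -> X -> (R -> E) -> X) (A : set X) (V : X -> R) : Prop :=
  continuous V /\ (forall x, 0 <= V x) /\
  (forall x, A x -> V x = 0) /\
  exists psi2 alpha : R -> R, classKinf psi2 /\ classK alpha /\
    (forall x, ~ A x -> 0 < V x /\ V x <= psi2 (dist_set A x)) /\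
    (forall x d, ~ A x -> Dc d ->
       (dini phi V x d <= (- alpha (dist_set A x))%:E)%E).

From mathcomp Require Import all_boot all_order all_algebra.
From mathcomp Require Import all_classical all_reals all_analysis.
From mathcomp Require Import lra.
Set Implicit Arguments. Unset Strict Implicit. Unset Printing Implicit Defensive.
Import Order.TTheory GRing.Theory Num.Theory.
Import numFieldNormedType.Exports.
Local Open Scope classical_set_scope.
Local Open Scope ring_scope.

(* Outside the unit neighbourhood of [A] the Lyapunov function decreases at rate at
   least [alpha 1 / 2] along every trajectory.  Hence a trajectory starting at [x]
   avoids that neighbourhood for a time bounded in terms of [|x|], and until then
   RFC bounds it by a constant depending only on [|x|]; such a bound is dominated by
   [kappa |x| * exp (- t)] for a suitable K-function [kappa].  Once the trajectory
   has entered the neighbourhood, the same time estimate, applied from the last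
   visit, where the state is bounded because [A] is, together with RFC gives a
   uniform bound [c]. *)

Section Staircase.
Variable R : realType.

Definition ramp (u : R) : R := Num.min 1 (Num.max 0 u).

Lemma ramp_le0 u : u <= 0 -> ramp u = 0.
Proof. by move=> u0; rewrite /ramp (max_idPl u0) (min_idPr ler01). Qed.

Lemma ramp_ge1 u : 1 <= u -> ramp u = 1.
Proof. by move=> u1; rewrite /ramp (max_idPr (le_trans ler01 u1)) (min_idPl u1). Qed.

Lemma ramp_ge0 u : 0 <= ramp u.
Proof. by rewrite le_min ler01 le_max lexx. Qed.

Lemma ramp_homo : {homo ramp : u v / u <= v}.
Proof. by move=> u v uv; rewrite le_min2 // le_max2. Qed.

Lemma continuous_ramp : continuous ramp.
Proof.
by apply: min_fun_continuous; [exact: cst_continuous |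
  apply: max_fun_continuous; [exact: cst_continuous | move=> ?; exact: cvg_id]].
Qed.

Variable b : nat -> R.

Definition ramp_sum (N : nat) (r : R) : R :=
  r + \sum_(0 <= m < N) b m * ramp (r - m%:R).

Definition staircase (r : R) : R := ramp_sum (Num.truncn r).+1 r.

Lemma ramp_sum_staircase N r : (Num.truncn r < N)%N -> ramp_sum N r = staircase r.
Proof.
move=> rN; rewrite /staircase /ramp_sum (big_cat_nat (leq0n _) rN) /=.
rewrite [X in _ + (_ + X)]big_nat_cond [X in _ + (_ + X)]big1 ?addr0 //.
move=> m /andP[/andP[rm _] _].
rewrite ramp_le0 ?mulr0 // subr_le0 ltW // (lt_le_trans (truncnS_gt r)) //.
by rewrite ler_nat.
Qed.

Lemma continuous_ramp_sum N : continuous (ramp_sum N).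
Proof.
move=> r; apply: cvgD; first exact: cvg_id.
elim: N => [|N IH].
  by under eq_fun do rewrite big_nil; rewrite big_nil; exact: cvg_cst.
under eq_fun do rewrite big_nat_recr //=; rewrite big_nat_recr //=.
apply: cvgD => //; apply: cvgM; first exact: cvg_cst.
apply: (continuous_comp (f := fun u : R => u - N%:R)); last exact: continuous_ramp.
by apply: cvgB; [exact: cvg_id | exact: cvg_cst].
Qed.

Lemma continuous_staircase : continuous staircase.
Proof.
move=> r; rewrite /continuous_at -(@ramp_sum_staircase (Num.truncn r).+2) //.
apply: cvg_trans; last exact: continuous_ramp_sum.
apply: near_eq_cvg; apply/nbhs_ballP; exists 1 => [|s]; first exact: ltr01.
rewrite /ball /= ltr_norml => rs.
apply: ramp_sum_staircase; rewrite ltnS truncn_le_nat -[(_.+2)%:R]natr1.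
have := truncnS_gt r; lra.
Qed.

Hypothesis b_ge0 : forall m, 0 <= b m.

Lemma staircase_homo : {homo staircase : r s / r < s}.
Proof.
move=> r s rs; pose N := (Num.truncn r + Num.truncn s).+1.
rewrite -(@ramp_sum_staircase N r) ?ltnS ?leq_addr //.
rewrite -(@ramp_sum_staircase N s) ?ltnS ?leq_addl //.
apply: ltr_leD => //; apply: ler_sum => m _; apply: ler_wpM2l => //.
by apply: ramp_homo; rewrite lerD2r ltW.
Qed.

Lemma staircase0 : staircase 0 = 0.
Proof. by rewrite /staircase /ramp_sum truncn0 big_nat1 subr0 ramp_le0 // mulr0 addr0. Qed.

Lemma staircase_ge0 r : 0 <= r -> 0 <= staircase r.
Proof.
rewrite le_eqVlt => /orP[/eqP <-|r0]; first by rewrite staircase0.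
by rewrite -staircase0 ltW // staircase_homo.
Qed.

Lemma staircase_ge (m : nat) r : m.+1%:R <= r -> b m <= staircase r.
Proof.
move=> mr; have r0 : 0 <= r by exact: le_trans mr.
have m_lt : (m < (Num.truncn r).+1)%N by rewrite ltnS ltnW // truncn_gt_nat.
rewrite /staircase /ramp_sum (big_cat_nat (leq0n m.+1) m_lt) /= big_nat_recr //=.
rewrite ramp_ge1 ?mulr1; last by rewrite lerBrDl; move: mr; rewrite -natr1; lra.
have sum_ge0 i j : 0 <= \sum_(i <= l < j) b l * ramp (r - l%:R).
  by apply: sumr_ge0 => l _; rewrite mulr_ge0 ?ramp_ge0.
by have := sum_ge0 0%N m; have := sum_ge0 m.+1 (Num.truncn r).+1; lra.
Qed.

End Staircase.

Lemma classKL_mul_expR (R : realType) (kappa : R -> R) :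
  continuous kappa -> {homo kappa : r s / r < s} -> kappa 0 = 0 ->
  classKL (fun r t => kappa r * expR (- t)).
Proof.
move=> kappa_cont kappa_homo kappa0; split; [|split].
- apply: continuous_subspaceT => p; apply: cvgM.
    apply: (continuous_comp (f := fst)); last exact: kappa_cont.
    exact: cvg_fst.
  apply: (continuous_comp (f := fun p : R * R => - p.2)); last exact: continuous_expR.
  by apply: cvgN; exact: cvg_snd.
- move=> t _; split; [|split].
  + by apply: continuous_subspaceT => r; apply: cvgM; [exact: kappa_cont | exact: cvg_cst].
  + by move=> r s _ rs; rewrite ltr_pM2r ?expR_gt0 // kappa_homo.
  + by rewrite kappa0 mul0r.
- move=> r r0; split.
  + move=> s t _ st; rewrite ltr_pM2l ?ltr_expR ?ltrN2 //.
    by rewrite -kappa0 kappa_homo.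
  + rewrite -[X in _ --> X](mulr0 (kappa r)).
    by apply: cvgM; [exact: cvg_cst | exact: cvgr_expR].
Qed.

Lemma KL_envelope (R : realType) (G T : nat -> R) :
  exists beta, classKL beta /\
    forall (n : nat) (r t : R), n%:R <= r -> t <= T n -> G n <= beta r t + `|G 0%N|.
Proof.
pose b j := `|G j.+1| * expR (T j.+1).
have b_ge0 j : 0 <= b j by rewrite mulr_ge0 ?expR_ge0.
exists (fun r t => staircase b r * expR (- t)); split.
  apply: classKL_mul_expR; [exact: continuous_staircase | exact: staircase_homo |].
  exact: staircase0.
case=> [|j] r t nr tT.
  have : 0 <= staircase b r * expR (- t) by rewrite mulr_ge0 ?expR_ge0 ?staircase_ge0.
  by have := ler_norm (G 0%N); lra.
have Gb : `|G j.+1| <= b j * expR (- t).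
  rewrite -mulrA -expRD -[leLHS]mulr1 ler_wpM2l //.
  by have := expR_ge1Dx (T j.+1 - t); lra.
have := ler_wpM2r (expR_ge0 (- t)) (staircase_ge b_ge0 nr).
by have := ler_norm (G j.+1); have := normr_ge0 (G 0%N); lra.
Qed.

Section ClassK.
Variables (R : realType) (g : R -> R).
Hypothesis gK : classK g.

Lemma classK_homo a b : 0 <= a -> a <= b -> g a <= g b.
Proof.
case: gK => _ [g_homo _] a0; rewrite le_eqVlt => /orP[/eqP -> //|ab].
exact/ltW/g_homo.
Qed.

Lemma classK_ge0 a : 0 <= a -> 0 <= g a.
Proof. by move=> a0; case: (gK) => _ [_ <-]; exact: classK_homo. Qed.

Lemma classK_gt0 a : 0 < a -> 0 < g a.
Proof. by move=> a0; case: gK => _ [g_homo <-]; exact: g_homo. Qed.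

End ClassK.

Section DistSet.
Variables (R : realType) (X : normedModType R) (A : set X).

Lemma dist_set_le x a : A a -> dist_set A x <= `|x - a|.
Proof. by move=> Aa; apply: ge_inf; [exists 0 => _ [b _ <-] | exists a]. Qed.

Hypothesis A_neq0 : A !=set0.

Lemma dist_set_ge0 x : 0 <= dist_set A x.
Proof.
by case: A_neq0 => a Aa; apply: lb_le_inf; [exists `|x - a|, a | move=> _ [b _ <-]].
Qed.

Variable MA : R.
Hypothesis A_le : forall a, A a -> `|a| <= MA.

Lemma bound_ge0 : 0 <= MA.
Proof. by case: A_neq0 => a /A_le; apply: le_trans. Qed.

Lemma dist_set_le_norm x : dist_set A x <= `|x| + MA.
Proof.
case: A_neq0 => a Aa; apply: le_trans (dist_set_le x Aa) _.
by apply: le_trans (ler_normB _ _) _; rewrite lerD2l A_le.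
Qed.

Lemma norm_le_dist_set x : `|x| <= dist_set A x + MA.
Proof.
rewrite -lerBlDr; case: A_neq0 => a Aa.
apply: lb_le_inf; first by exists `|x - a|, a.
move=> _ [b Ab <-]; rewrite lerBlDr.
by have := ler_normD (x - b) b; rewrite subrK; have := A_le Ab; lra.
Qed.

End DistSet.

Lemma within_continuous_dist_lt (R : realType) (V : normedModType R) (S : set R)
    (f : R -> V) t e :
  {within S, continuous f} -> S t -> 0 < e ->
  exists2 del, 0 < del & forall s, S s -> `|s - t| < del -> `|f s - f t| < e.
Proof.
move=> f_cont St e0.
have : f @ within S (nbhs t) --> f t by rewrite nbhs_subspace_in //; exact: f_cont.
move=> /cvgrPdist_lt /(_ e e0) /nbhs_ballP [del del0 near_t].
exists del => // s Ss st; rewrite distrC; apply: near_t Ss.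
by rewrite /ball /= distrC.
Qed.

Lemma right_descent_le (R : realType) (w : R -> R) (a b : R) :
  a <= b -> {within `[a, b], continuous w} ->
  (forall s, a <= s < b -> forall e, 0 < e ->
     exists2 h, 0 < h < e & w (s + h) <= w s) ->
  w b <= w a.
Proof.
move=> ab w_cont w_desc.
pose S := [set s | a <= s <= b /\ w s <= w a].
have Sa : S a by rewrite /S /= lexx ab.
have S_sup : has_sup S by split; [exists a | exists b => s [/andP[]]].
set s0 := sup S.
have as0 : a <= s0 := sup_upper_bound S_sup Sa.
have s0b : s0 <= b by apply: ge_sup; [exists a | move=> s [/andP[]]].
have ws0 : w s0 <= w a.
  apply/ler_addgt0Pr => e e0.
  have s0_in : `[a, b]%classic s0 by rewrite /= in_itv /= as0 s0b.
  have [del del0 near_s0] := within_continuous_dist_lt w_cont s0_in e0.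
  have [s [sab wsa] s0s] := sup_adherent del0 S_sup.
  have ss0 : s <= s0 by apply: sup_upper_bound.
  have : `|w s - w s0| < e.
    apply: near_s0; first by rewrite /= in_itv.
    rewrite ler0_norm ?subr_le0 // opprB; rewrite -/s0 in s0s; lra.
  by rewrite ltr_norml; lra.
suff <- : s0 = b by [].
apply/eqP; rewrite eq_le s0b leNgt; apply/negP => s0_lt_b.
have s0_in : a <= s0 < b by rewrite as0.
have [|h /andP[h0 hb] wh] := w_desc s0 s0_in (b - s0); first by rewrite subr_gt0.
have Sh : S (s0 + h) by split; [apply/andP; split; lra | exact: le_trans ws0].
by have := sup_upper_bound S_sup Sh; rewrite -/s0; lra.
Qed.

Lemma dini_lt_slope (R : realType) (X E : normedModType R)
    (phi : R -> X -> (R -> E) -> X) (V : X -> R) x d r :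
  (dini phi V x d < r%:E)%E -> forall e, 0 < e ->
  exists2 h, 0 < h < e & (V (phi h x d) - V x) / h < r.
Proof.
move=> dini_lt e e0.
have /ereal_inf_lt[_ [h h_in <-]] : (ereal_inf [set ((V (phi t x d) - V x) / t)%R%:E
    | t in [set t : R | (0 < t < e)%R]] < r%:E)%E.
  by apply: le_lt_trans dini_lt; apply: ereal_sup_ubound; exists e.
by rewrite lte_fin; exists h.
Qed.

Section NoncoerciveLyapunov.
Variables (R : realType) (X E : normedModType R) (D : set E) (Dc : set (R -> E))
  (phi : R -> X -> (R -> E) -> X).
Hypothesis sys : is_system D Dc phi.

Lemma system_shift d s : Dc d -> 0 <= s -> Dc (fun u => d (s + u)).
Proof.
case: sys => _ [_ [shift _]] Dd s0.
by under eq_fun do rewrite addrC; exact: shift.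
Qed.

Lemma system_phi0 x d : Dc d -> phi 0 x d = x.
Proof. by case: sys => _ [_ [_ [_ [phi0 _]]]]; exact: phi0. Qed.

Lemma system_continuous x d :
  Dc d -> {within [set t | 0 <= t], continuous (fun t => phi t x d)}.
Proof. by case: sys => _ [_ [_ [_ [_ [_ [cont _]]]]]]; exact: cont. Qed.

Lemma system_cocycle x d s h : Dc d -> 0 <= s -> 0 <= h ->
  phi h (phi s x d) (fun u => d (s + u)) = phi (s + h) x d.
Proof. by case: sys => _ [_ [_ [_ [_ [_ [_ cocycle]]]]]]; exact: cocycle. Qed.

Variables (A : set X) (V : X -> R) (alpha : R -> R).
Hypotheses (V_cont : continuous V) (V_ge0 : forall x, 0 <= V x) (alphaK : classK alpha)
  (V_dini : forall x d, ~ A x -> Dc d ->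
     (dini phi V x d <= (- alpha (dist_set A x))%:E)%E).

Let k := alpha 1 / 2.

Let k_gt0 : 0 < k.
Proof. by rewrite divr_gt0 // classK_gt0. Qed.

Lemma far_time_le x d a b : Dc d -> 0 <= a -> a <= b ->
  (forall s, a <= s < b -> 1 < dist_set A (phi s x d)) ->
  k * (b - a) <= V (phi a x d).
Proof.
move=> Dd a0 ab far.
pose w s := V (phi s x d) + k * (s - a).
suff : w b <= w a by rewrite /w subrr mulr0 addr0; have := V_ge0 (phi b x d); lra.
apply: right_descent_le => // [|s s_in e e0].
  have sub : `[a, b]%classic `<=` [set t | 0 <= t].
    by move=> s; rewrite /= in_itv /= => /andP[a_s _]; exact: le_trans a_s.
  have phi_cont := continuous_subspaceW sub (system_continuous (x := x) Dd).
  have drift_cont : continuous (fun s : R => k * (s - a)).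
    move=> s; apply: cvgM; first exact: cvg_cst.
    by apply: cvgB; [exact: cvg_id | exact: cvg_cst].
  move=> s; apply: cvgD.
    by apply: continuous_comp; [exact: phi_cont | exact: V_cont].
  exact: (continuous_subspaceT drift_cont).
have s0 : 0 <= s by case/andP: s_in => a_s _; exact: le_trans a_s.
have far_s := far s s_in.
have nAs : ~ A (phi s x d).
  by move=> As; have := dist_set_le (phi s x d) As; rewrite subrr normr0; lra.
have dini_lt : (dini phi V (phi s x d) (fun u => d (s + u)%R) < (- k)%:E)%E.
  apply: le_lt_trans (V_dini nAs (system_shift Dd s0)) _; rewrite lte_fin ltrN2.
  have := classK_homo alphaK ler01 (ltW far_s); have := classK_gt0 alphaK ltr01.
  rewrite /k; lra.
have [h /andP[h0 he] slope] := dini_lt_slope dini_lt e0.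
exists h; first by rewrite h0.
move: slope; rewrite system_cocycle ?(ltW h0) // ltr_pdivrMr // /w; lra.
Qed.

Variables (MA : R) (psi : R -> R).
Hypotheses (A_neq0 : A !=set0) (A_le : forall a, A a -> `|a| <= MA) (rfc : RFC Dc phi)
  (V_le : forall x, V x <= psi `|x|)
  (psi_homo : forall r s, 0 <= r -> r <= s -> psi r <= psi s).

Lemma norm_le_from_near_start : exists M, forall y d tau t, Dc d ->
  `|y| <= MA + 1 -> 0 <= tau <= 1 -> tau <= t ->
  (forall s, tau <= s < t -> 1 < dist_set A (phi s y d)) -> `|phi t y d| <= M.
Proof.
have MA1_gt0 : 0 < MA + 1 by have := bound_ge0 A_neq0 A_le; lra.
have [M1 phi_le_M1] := rfc MA1_gt0 ltr01.
have T_gt0 : 0 < 1 + `|psi M1| / k.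
  by have := divr_ge0 (normr_ge0 (psi M1)) (ltW k_gt0); lra.
have [M phi_le_M] := rfc MA1_gt0 T_gt0.
exists M => y d tau t Dd y_le /andP[tau0 tau1] tau_t far.
have phi_tau : `|phi tau y d| <= M1 by apply: phi_le_M1; rewrite ?tau0.
have V_tau : V (phi tau y d) <= `|psi M1|.
  apply: le_trans (V_le _) (le_trans (psi_homo (normr_ge0 _) phi_tau) (ler_norm _)).
have t_le : t - tau <= `|psi M1| / k.
  by rewrite ler_pdivlMr // mulrC; have := far_time_le Dd tau0 tau_t far; lra.
by apply: phi_le_M => //; apply/andP; split; lra.
Qed.

(* Restart the trajectory at a near visit [u] at most [1/2] before the last one [q]. *)
Lemma norm_le_after_visit : exists M, forall x d s t, Dc d -> 0 <= s <= t ->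
  dist_set A (phi s x d) <= 1 -> `|phi t x d| <= M.
Proof.
have [M phi_le_M] := norm_le_from_near_start.
exists M => x d s t Dd /andP[s0 st] near_s.
pose Q := [set u | 0 <= u <= t /\ dist_set A (phi u x d) <= 1].
have Q_sup : has_sup Q by split; [exists s; rewrite /Q /= s0 | exists t => u [/andP[]]].
set q := sup Q.
have half_gt0 : 0 < 1 / 2 :> R by lra.
have [u [/andP[u0 ut] near_u] qu] := sup_adherent half_gt0 Q_sup.
rewrite -/q in qu.
have uq : u <= q by apply: sup_upper_bound => //; rewrite /Q /= u0.
pose tau := Num.min t (q + 1 / 2) - u.
have tau_t : tau <= t - u by rewrite lerD2r ge_min lexx.
have tau_in : 0 <= tau <= 1.
  have min_le : Num.min t (q + 1 / 2) <= q + 1 / 2 by rewrite ge_min lexx orbT.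
  have le_min : u <= Num.min t (q + 1 / 2) by rewrite le_min ut /=; lra.
  by rewrite /tau; apply/andP; split; lra.
rewrite -[t](subrK u) addrC -system_cocycle ?subr_ge0 //.
have /andP[tau0 _] := tau_in.
apply: phi_le_M tau_in tau_t _ => [||r /andP[tau_r r_t]]; first exact: system_shift.
- have := norm_le_dist_set A_neq0 A_le (phi u x d); lra.
- rewrite system_cocycle //; last exact: le_trans tau_r.
  rewrite ltNge; apply/negP => near_ur.
  have Qur : Q (u + r) by split => //; apply/andP; split; lra.
  have := sup_upper_bound Q_sup Qur; rewrite -/q.
  by move: tau_r; rewrite /tau lerBlDl ge_min; lra.
Qed.

Lemma practically_UGAS : exists beta c, classKL beta /\ 0 < c /\
  forall x d t, Dc d -> 0 <= t -> `|phi t x d| <= beta `|x| t + c.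
Proof.
have [M phi_le_M] := norm_le_after_visit.
pose T (n : nat) := 1 + `|psi n.+1%:R| / k.
have /choice[G phi_le_G] (n : nat) : exists G, forall x d t,
    `|x| <= n.+1%:R -> Dc d -> 0 <= t <= T n -> `|phi t x d| <= G.
  apply: rfc; rewrite ?ltr0Sn // /T.
  by have := divr_ge0 (normr_ge0 (psi n.+1%:R)) (ltW k_gt0); lra.
have [beta [betaKL G_le_beta]] := KL_envelope G T.
exists beta, (`|M| + `|G 0%N| + 1); split => //; split.
  by have := normr_ge0 M; have := normr_ge0 (G 0%N); lra.
move=> x d t Dd t0; have beta_ge0 : 0 <= beta `|x| t.
  by case: betaKL => _ [/(_ t t0) betaK _]; exact: (classK_ge0 betaK (normr_ge0 x)).
have [[s [s_in near_s]]|never_near] :=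
  pselect (exists s, 0 <= s <= t /\ dist_set A (phi s x d) <= 1).
  have := phi_le_M x d s t Dd s_in near_s; have := ler_norm M.
  by have := normr_ge0 (G 0%N); lra.
pose n := Num.truncn `|x|.
have t_le : t <= T n.
  have := far_time_le (x := x) Dd (lexx 0) t0; rewrite system_phi0 // subr0.
  have : V x <= `|psi n.+1%:R|.
    apply: le_trans (V_le x) (le_trans (psi_homo (normr_ge0 _) _) (ler_norm _)).
    exact/ltW/truncnS_gt.
  move=> V_le_psi k_t; rewrite /T; suff : t <= `|psi n.+1%:R| / k by lra.
  rewrite ler_pdivlMr // mulrC; apply: le_trans (k_t _) V_le_psi.
  move=> s /andP[s0 st]; rewrite ltNge; apply/negP => near_s.
  by apply: never_near; exists s; rewrite s0 (ltW st).
have : `|phi t x d| <= G n by apply: phi_le_G; rewrite ?t0 ?t_le ?ltW ?truncnS_gt.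
have := G_le_beta n `|x| t _ t_le; rewrite truncn_le normr_ge0 => /(_ isT).
by have := normr_ge0 M; lra.
Qed.

End NoncoerciveLyapunov.

(* The distance to the empty set is [inf set0 = 0], so [V 0 <= psi2 0 = 0] would
   contradict the positivity of [V] outside [A]. *)
Lemma noncoercive_LF_neq0 (R : realType) (X E : normedModType R) (Dc : set (R -> E))
    (phi : R -> X -> (R -> E) -> X) (A : set X) (V : X -> R) :
  noncoercive_LF Dc phi A V -> A !=set0.
Proof.
case=> _ [_ [_ [psi2 [_ [[[_ [_ psi2_0]] _] [_ [V_pos_le _]]]]]]].
apply/set0P/negP => /eqP A0.
have nA0 : ~ A 0 by rewrite A0.
by have := V_pos_le 0 nA0; rewrite /dist_set A0 image_set0 inf0 psi2_0; lra.
Qed.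

Theorem corollary24 (R : realType) (X E : normedModType R) (D : set E)
  (Dc : set (R -> E)) (phi : R -> X -> (R -> E) -> X) :
  is_system D Dc phi ->
  RFC Dc phi ->
  (exists (A : set X) (V : X -> R),
     (exists M : R, forall y, A y -> `|y| <= M) /\ noncoercive_LF Dc phi A V) ->
  exists (beta : R -> R -> R) (c : R), classKL beta /\ 0 < c /\
    forall x d t, Dc d -> 0 <= t -> `|phi t x d| <= beta `|x| t + c.
Proof.
move=> sys rfc [A [V [[MA A_le] LF]]].
have A_neq0 := noncoercive_LF_neq0 LF.
have MA_ge0 := bound_ge0 A_neq0 A_le.
case: LF => V_cont [V_ge0 [V_A [psi2 [alpha [[psi2K _] [alphaK [V_pos_le V_dini]]]]]]].
apply: (practically_UGAS sys V_cont V_ge0 alphaK V_dini A_neq0 A_le rfc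
          (psi := fun r => psi2 (r + MA))) => [x|r s r0 rs].
  have [Ax|nAx] := pselect (A x); first by rewrite V_A // classK_ge0 ?addr_ge0.
  apply: le_trans (proj2 (V_pos_le x nAx)) (classK_homo psi2K _ _).
    exact: dist_set_ge0.
  exact: dist_set_le_norm.
by apply: (classK_homo psi2K); rewrite ?addr_ge0 ?lerD2r.
Qed.
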